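(* For a non-negative integer $n$ let $a_n\langle n!\rangle=\sum_{k=0}^{\infty}k^n\,2^{-k}$ (with $0^0=1$); these are integers $2,2,6,26,150,1082,\dots$. For every natural number $n$ such that $n+1$ is prime, \[ a_n\langle n!\rangle\equiv 0 \pmod{n+1}. \] *)

From Stdlib Require Import Reals ZArith Znumtheory.
From Coquelicot Require Import Coquelicot.
Open Scope R_scope.

(* a_n<n!> = sum_{k>=0} k^n 2^{-k}, with 0^0 = 1 (Stdlib's pow 0 0 = 1). *)
Definition a_fact (n : nat) : R := Series (fun k : nat => INR k ^ n / 2 ^ k).

(* Put T(c) = sum_k (k + c)^n / 2^k, so that a_n = T(0).  Dropping the term k = 0 gives
   T(c) = c^n + T(c + 1) / 2, hence T(p) = 2^p a_n - sum_(i<p) 2^(p-i) i^n for natural p,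
   while expanding (k + p)^n binomially gives T(p) = sum_j C(n,j) p^(n-j) a_j.  For p = 1
   this yields a recursion showing that every a_j is an integer; for p = n + 1 it yields
   (2^p - 1) a_n = sum_(i<p) 2^(p-i) i^n (mod p).  When p is prime, Fermat's little theorem
   gives 2^p - 1 = 1 and i^n = 1 for 0 < i < p, so a_n = 2^p - 2 = 0 (mod p). *)

From Stdlib Require Import Reals ZArith Znumtheory Lia Lra.
From Coquelicot Require Import Coquelicot.
From mathcomp Require ssreflect ssrbool eqtype ssrnat div prime binomial zify.

(* Kept in a module so that the ssreflect notations on [nat] do not leak into the rest. *)
Module FermatLittle.
Import ssreflect ssrbool eqtype ssrnat div prime binomial zify.

Lemma prime_of_Zprime (p : nat) : Znumtheory.prime (Z.of_nat p) -> prime.prime p.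
Proof.
move=> hp; apply/primeP; split; first by have := prime_ge_2 _ hp; lia.
move=> d /dvdnP [k def_p].
have /(prime_divisors _ hp) : (Z.of_nat d | Z.of_nat p)%Z by exists (Z.of_nat k); lia.
by move=> hd; apply/orP; lia.
Qed.

Lemma Zdivide_pow_prime_sub (p a : nat) : Znumtheory.prime (Z.of_nat p) ->
  (Z.of_nat p | Z.of_nat a ^ Z.of_nat p - Z.of_nat a)%Z.
Proof.
move=> hp; have p_gt0 : (0 < p)%N by have := prime_ge_2 _ hp; lia.
have le_a_ap : (a <= a ^ p)%N by case: a => // a; rewrite -{1}(expn1 a.+1) leq_pexp2l.
have /dvdnP [k def_k] : (p %| a ^ p - a)%N.
  by rewrite -eqn_mod_dvd //; apply/eqP; apply: fermat_little; apply: prime_of_Zprime.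
by exists (Z.of_nat k); lia.
Qed.

End FermatLittle.

Lemma Zdivide_pow_pred_sub_1 (n a : nat) : prime (Z.of_nat (n + 1)) -> (1 <= a <= n)%nat ->
  (Z.of_nat (n + 1) | Z.of_nat a ^ Z.of_nat n - 1)%Z.
Proof.
  intros hp ha.
  pose proof (FermatLittle.Zdivide_pow_prime_sub (n + 1) a hp) as H.
  replace (Z.of_nat a ^ Z.of_nat (n + 1) - Z.of_nat a)%Z
    with (Z.of_nat a * (Z.of_nat a ^ Z.of_nat n - 1))%Z in H
    by (rewrite Nat2Z.inj_add, Z.pow_add_r, Z.pow_1_r by lia; ring).
  destruct (prime_mult _ hp _ _ H) as [Hdiv | Hdiv]; [|exact Hdiv].
  apply Z.divide_pos_le in Hdiv; lia.
Qed.

(* [geometric_power_sum n c = sum_(i < c) 2^(c - i) i^n]. *)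
Fixpoint geometric_power_sum (n c : nat) : Z :=
  match c with
  | O => 0
  | S i => 2 * geometric_power_sum n i + 2 * Z.of_nat i ^ Z.of_nat n
  end%Z.

Lemma geometric_power_sum_mod (n c : nat) :
  prime (Z.of_nat (n + 1)) -> (1 <= n)%nat -> (1 <= c <= n + 1)%nat ->
  (Z.of_nat (n + 1) | geometric_power_sum n c - (2 ^ Z.of_nat c - 2))%Z.
Proof.
  intros hp hn. induction c as [|c IH]; intros hc; [lia|].
  destruct (Nat.eq_dec c 0) as [->|hc0].
  - simpl. rewrite Z.pow_0_l by lia. apply Z.divide_0_r.
  - replace (geometric_power_sum n (S c) - (2 ^ Z.of_nat (S c) - 2))%Z
      with (2 * (geometric_power_sum n c - (2 ^ Z.of_nat c - 2))
            + 2 * (Z.of_nat c ^ Z.of_nat n - 1))%Z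
      by (cbn [geometric_power_sum]; rewrite Nat2Z.inj_succ, Z.pow_succ_r by lia; ring).
    apply Z.divide_add_r; apply Z.divide_mul_r.
    + apply IH; lia.
    + apply Zdivide_pow_pred_sub_1; [exact hp | lia].
Qed.

Lemma Zdivide_geometric_power_sum (n : nat) : prime (Z.of_nat (n + 1)) ->
  (Z.of_nat (n + 1) | geometric_power_sum n (n + 1))%Z.
Proof.
  intros hp.
  assert (hn : (1 <= n)%nat) by (pose proof (prime_ge_2 _ hp); lia).
  replace (geometric_power_sum n (n + 1))
    with (geometric_power_sum n (n + 1) - (2 ^ Z.of_nat (n + 1) - 2)
          + (2 ^ Z.of_nat (n + 1) - 2))%Z by ring.
  apply Z.divide_add_r.
  - apply geometric_power_sum_mod; auto; lia.
  - apply (FermatLittle.Zdivide_pow_prime_sub (n + 1) 2 hp).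
Qed.

Open Scope R_scope.

Lemma is_lim_seq_pow (u : nat -> R) (l : R) (n : nat) :
  is_lim_seq u l -> is_lim_seq (fun k => u k ^ n) (l ^ n).
Proof.
  intros Hu. induction n as [|n IH]; simpl.
  - apply is_lim_seq_const.
  - exact (is_lim_seq_mult' _ _ _ _ Hu IH).
Qed.

Lemma is_lim_seq_one_plus_inv_S_pow (n : nat) :
  is_lim_seq (fun k => (1 + / INR (S k)) ^ n) 1.
Proof.
  replace (Finite 1) with (Finite (1 ^ n)) by (rewrite pow1; reflexivity).
  apply is_lim_seq_pow.
  replace (Finite 1) with (Finite (1 + 0)) by (f_equal; ring).
  apply is_lim_seq_plus'; [apply is_lim_seq_const|].
  apply (is_lim_seq_inv _ p_infty); [|discriminate].
  apply (is_lim_seq_incr_1 INR p_infty), is_lim_seq_INR.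
Qed.

(* D'Alembert's ratio test, applied from [k = 1] on where the terms do not vanish. *)
Lemma ex_series_pow_div_pow2 (n : nat) : ex_series (fun k => INR k ^ n / 2 ^ k).
Proof.
  apply ex_series_incr_1, ex_series_Rabs.
  apply (ex_series_DAlembert _ (/ 2)); [lra| |].
  - intros k. apply Rmult_integral_contrapositive_currified.
    + apply pow_nonzero, not_0_INR. discriminate.
    + apply Rinv_neq_0_compat, pow_nonzero. lra.
  - apply is_lim_seq_ext with (u := fun k => (1 + / INR (S k)) ^ n * / 2).
    + intros k.
      assert (hk : 0 < / INR (S k)) by (apply Rinv_0_lt_compat, lt_0_INR; lia).
      assert (ratio : INR (S (S k)) ^ n / 2 ^ S (S k) / (INR (S k) ^ n / 2 ^ S k)
                      = (1 + / INR (S k)) ^ n * / 2).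
      { rewrite (S_INR (S k)).
        replace (INR (S k) + 1) with (INR (S k) * (1 + / INR (S k)))
          by (field; apply not_0_INR; discriminate).
        rewrite Rpow_mult_distr. simpl (2 ^ S _). field.
        split; [apply pow_nonzero; lra | apply pow_nonzero, not_0_INR; discriminate]. }
      rewrite ratio, Rabs_pos_eq; [reflexivity|].
      apply Rmult_le_pos; [apply pow_le|]; lra.
    + replace (Finite (/ 2)) with (Finite (1 * / 2)) by (rewrite Rmult_1_l; reflexivity).
      apply is_lim_seq_mult'; [apply is_lim_seq_one_plus_inv_S_pow | apply is_lim_seq_const].
Qed.

Lemma ex_series_sum_f_R0 (f : nat -> nat -> R) (N : nat) :
  (forall j, ex_series (f j)) -> ex_series (fun k => sum_f_R0 (fun j => f j k) N).
Proof.
  intros Hf. induction N as [|N IH]; simpl.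
  - apply Hf.
  - apply (@ex_series_plus R_AbsRing R_NormedModule); [exact IH | apply Hf].
Qed.

Lemma Series_sum_f_R0 (f : nat -> nat -> R) (N : nat) :
  (forall j, ex_series (f j)) ->
  Series (fun k => sum_f_R0 (fun j => f j k) N) = sum_f_R0 (fun j => Series (f j)) N.
Proof.
  intros Hf. induction N as [|N IH]; simpl; [reflexivity|].
  rewrite Series_plus, IH; [reflexivity | apply ex_series_sum_f_R0, Hf | apply Hf].
Qed.

Definition shifted_moment (n : nat) (c : R) : R := Series (fun k => (INR k + c) ^ n / 2 ^ k).

Lemma a_fact_shifted_moment (n : nat) : a_fact n = shifted_moment n 0.
Proof. apply Series_ext. intros k. now rewrite Rplus_0_r. Qed.

Definition binomial_summand (n : nat) (c : R) (j k : nat) : R :=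
  Binomial.C n j * c ^ (n - j) * (INR k ^ j / 2 ^ k).

Lemma shifted_moment_term (n k : nat) (c : R) :
  (INR k + c) ^ n / 2 ^ k = sum_f_R0 (fun j => binomial_summand n c j k) n.
Proof.
  unfold binomial_summand, Rdiv. rewrite binomial, Rmult_comm, scal_sum.
  apply sum_eq. intros j _. ring.
Qed.

Lemma ex_series_binomial_summand (n : nat) (c : R) (j : nat) : ex_series (binomial_summand n c j).
Proof. apply (@ex_series_scal_l R_AbsRing R_NormedModule), ex_series_pow_div_pow2. Qed.

Lemma ex_series_shifted_moment (n : nat) (c : R) :
  ex_series (fun k => (INR k + c) ^ n / 2 ^ k).
Proof.
  apply (ex_series_ext (fun k => sum_f_R0 (fun j => binomial_summand n c j k) n)).
  - intros k. symmetry. apply shifted_moment_term.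
  - apply ex_series_sum_f_R0. intros j. apply ex_series_binomial_summand.
Qed.

Lemma shifted_moment_binomial (n : nat) (c : R) :
  shifted_moment n c = sum_f_R0 (fun j => Binomial.C n j * c ^ (n - j) * a_fact j) n.
Proof.
  unfold shifted_moment. rewrite (Series_ext _ _ (fun k => shifted_moment_term n k c)).
  rewrite (Series_sum_f_R0 (binomial_summand n c)) by apply ex_series_binomial_summand.
  apply sum_eq. intros j _. apply Series_scal_l.
Qed.

Lemma shifted_moment_succ (n : nat) (c : R) :
  shifted_moment n c = c ^ n + / 2 * shifted_moment n (c + 1).
Proof.
  unfold shifted_moment. rewrite Series_incr_1 by apply ex_series_shifted_moment.
  rewrite <- Series_scal_l. simpl (INR 0). f_equal.
  - rewrite Rplus_0_l. simpl. field.
  - apply Series_ext. intros k. rewrite S_INR. simpl (2 ^ S k).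
    replace (INR k + 1 + c) with (INR k + (c + 1)) by ring.
    field. apply pow_nonzero. lra.
Qed.

Lemma shifted_moment_nat (n c : nat) :
  shifted_moment n (INR c) = 2 ^ c * a_fact n - IZR (geometric_power_sum n c).
Proof.
  induction c as [|c IH].
  - simpl. rewrite <- a_fact_shifted_moment. ring.
  - pose proof (shifted_moment_succ n (INR c)) as H. rewrite <- S_INR in H.
    cbn [geometric_power_sum]. rewrite plus_IZR, !mult_IZR, <- pow_IZR, <- INR_IZR_INZ.
    simpl (2 ^ S c). lra.
Qed.

Lemma a_fact_0 : a_fact 0 = 2.
Proof.
  pose proof (shifted_moment_succ 0 0) as H.
  rewrite (shifted_moment_binomial _ (0 + 1)), <- a_fact_shifted_moment in H.
  simpl in H. rewrite C_n_0 in H. lra.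
Qed.

Lemma a_fact_succ (n : nat) :
  a_fact (S n) = sum_f_R0 (fun j => Binomial.C (S n) j * a_fact j) n.
Proof.
  pose proof (shifted_moment_succ (S n) 0) as H.
  rewrite (shifted_moment_binomial _ (0 + 1)), <- a_fact_shifted_moment in H.
  rewrite tech5, C_n_n, Nat.sub_diag, Rplus_0_l in H.
  rewrite (sum_eq _ (fun j => Binomial.C (S n) j * a_fact j)) in H
    by (intros j _; rewrite pow1; ring).
  simpl pow in H. lra.
Qed.

Definition is_int (x : R) : Prop := exists z : Z, x = IZR z.

Lemma is_int_INR (k : nat) : is_int (INR k).
Proof. exists (Z.of_nat k). apply INR_IZR_INZ. Qed.

Lemma is_int_plus (x y : R) : is_int x -> is_int y -> is_int (x + y).
Proof. intros [a ->] [b ->]. exists (a + b)%Z. symmetry. apply plus_IZR. Qed.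

Lemma is_int_mult (x y : R) : is_int x -> is_int y -> is_int (x * y).
Proof. intros [a ->] [b ->]. exists (a * b)%Z. symmetry. apply mult_IZR. Qed.

Lemma is_int_pow (x : R) (k : nat) : is_int x -> is_int (x ^ k).
Proof. intros [a ->]. exists (a ^ Z.of_nat k)%Z. apply pow_IZR. Qed.

Lemma is_int_sum_f_R0 (f : nat -> R) (N : nat) :
  (forall i, (i <= N)%nat -> is_int (f i)) -> is_int (sum_f_R0 f N).
Proof.
  induction N as [|N IH]; intros Hf; simpl.
  - apply Hf. lia.
  - apply is_int_plus; [apply IH; intros i hi|]; apply Hf; lia.
Qed.

Lemma is_int_binomial (n j : nat) : (j <= n)%nat -> is_int (Binomial.C n j).
Proof.
  revert j. induction n as [|n IH]; intros j hj.
  - replace j with 0%nat by lia. rewrite C_n_0. exists 1%Z. reflexivity.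
  - destruct j as [|i]; [rewrite C_n_0; exists 1%Z; reflexivity|].
    destruct (Nat.eq_dec i n) as [->|hin]; [rewrite C_n_n; exists 1%Z; reflexivity|].
    rewrite <- pascal by lia. apply is_int_plus; apply IH; lia.
Qed.

Lemma is_int_a_fact (n : nat) : is_int (a_fact n).
Proof.
  induction n as [n IH] using lt_wf_ind. destruct n as [|n].
  - rewrite a_fact_0. exists 2%Z. reflexivity.
  - rewrite a_fact_succ. apply is_int_sum_f_R0. intros j hj.
    apply is_int_mult; [apply is_int_binomial | apply IH]; lia.
Qed.

Lemma a_fact_mul_pow2_sub_1 (n c : nat) :
  exists y : Z, (2 ^ c - 1) * a_fact n = IZR (geometric_power_sum n c) + INR c * IZR y.
Proof.
  pose proof (shifted_moment_binomial n (INR c)) as H.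
  rewrite shifted_moment_nat in H.
  destruct n as [|n].
  - exists 0%Z. simpl in H. rewrite C_n_0 in H. lra.
  - rewrite tech5, C_n_n, Nat.sub_diag in H.
    set (rest := sum_f_R0 (fun j => Binomial.C (S n) j * INR c ^ (n - j) * a_fact j) n).
    assert (Hrest : sum_f_R0 (fun j => Binomial.C (S n) j * INR c ^ (S n - j) * a_fact j) n
                    = INR c * rest).
    { unfold rest. rewrite scal_sum. apply sum_eq. intros j hj.
      replace (S n - j)%nat with (S (n - j)) by lia. simpl. ring. }
    destruct (is_int_sum_f_R0 (fun j => Binomial.C (S n) j * INR c ^ (n - j) * a_fact j) n)
      as [y Hy].
    { intros j hj. apply is_int_mult; [apply is_int_mult|].
      - apply is_int_binomial. lia.
      - apply is_int_pow, is_int_INR.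
      - apply is_int_a_fact. }
    exists y. fold rest in Hy. rewrite Hrest, Hy in H. simpl pow in H. lra.
Qed.

Theorem mainTheorem4 (n : nat) (hp : prime (Z.of_nat (n + 1))) :
  exists m : Z, a_fact n = IZR m /\ (Z.of_nat (n + 1) | m)%Z.
Proof.
  destruct (is_int_a_fact n) as [m Hm].
  destruct (a_fact_mul_pow2_sub_1 n (n + 1)) as [y Hy].
  exists m. split; [exact Hm|].
  set (p := Z.of_nat (n + 1)).
  assert (Hz : ((2 ^ p - 1) * m = geometric_power_sum n (n + 1) + p * y)%Z).
  { apply eq_IZR. unfold p.
    rewrite mult_IZR, plus_IZR, mult_IZR, minus_IZR, <- pow_IZR, <- INR_IZR_INZ, <- Hm.
    exact Hy. }
  replace m with ((2 ^ p - 1) * m - (2 ^ p - 2) * m)%Z by ring.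
  rewrite Hz.
  apply Z.divide_sub_r; [apply Z.divide_add_r|].
  - now apply Zdivide_geometric_power_sum.
  - apply Z.divide_factor_l.
  - apply Z.divide_mul_l, (FermatLittle.Zdivide_pow_prime_sub (n + 1) 2 hp).
Qed.
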